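(* For integers $a,b\ge0$ and $1\le r\le a+b$, $D_{2r+1}\big(\zeta^{\mathfrak f}(\{2\}^a,3,\{2\}^b)\big)=\pi_{2r+1}\big(\alpha(\xi^r_{a,b})\big)\otimes\zeta^{\mathfrak f}(\{2\}^{a+b+1-r})$, where $\xi^r_{a,b}=\sum_{\substack{0\le\alpha'\le a,\ 0\le\beta\le b\\ \alpha'+\beta+1=r}}\zeta^{\mathfrak f}(\{2\}^{\alpha'},3,\{2\}^\beta)-\sum_{\substack{0\le\alpha'<a,\ 0\le\beta\le b\\ \alpha'+\beta+1=r}}\zeta^{\mathfrak f}(\{2\}^\beta,3,\{2\}^{\alpha'})+2\big(\mathbb 1(a\ge r)-\mathbb 1(b\ge r)\big)\sum_{i=1}^r(-1)^i\zeta^{\mathfrak f}(2i+1)\zeta^{\mathfrak f}(\{2\}^{r-i})$, and $\mathbb 1(P)$ is $1$ if $P$ holds and $0$ otherwise.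
   Context: Formal MZVs: $\mathcal X=\{x_0,x_1\}$, $\mathbb Q\langle\mathcal X\rangle$ free noncommutative polynomials (weight = number of letters), $ш$ shuffle product. $\mathcal Z^{\mathfrak f}=(\mathbb Q\langle\mathcal X\rangle,ш)/R$, $R$ the ideal generated by $x_0,x_1$ and $uш v-\iota(\iota^{-1}(u)*\iota^{-1}(v))$ for $u\in\mathbb Q\mathbf1+x_0\mathbb Q\langle\mathcal X\rangle x_1$, $v\in\mathbb Q\mathbf1+\mathbb Q\langle\mathcal X\rangle x_1$, with $\iota(y_{k_1}\cdots y_{k_d})=x_0^{k_1-1}x_1\cdots x_0^{k_d-1}x_1$ and $*$ the stuffle product ($y_iu*y_jv=y_i(u*y_jv)+y_j(y_iu*v)+y_{i+j}(u*v)$). $\zeta^{\mathfrak f}(k_1,\dots,k_d)$ is the class of $x_0^{k_1-1}x_1\cdots x_0^{k_d-1}x_1$; $\{2\}^m$ is $m$ entries $2$, $\zeta^{\mathfrak f}(\{2\}^0)=1$. $\mathcal A^{\mathfrak f}=\mathcal Z^{\mathfrak f}/(\zeta^{\mathfrak f}(2))$, $\alpha$ the projection; Goncharov coaction $\Delta_{\mathrm{Gon}}:\mathcal Z^{\mathfrak f}\to\mathcal A^{\mathfrak f}\otimes\mathcal Z^{\mathfrak f}$, $\zeta^{\mathfrak f}(w)\mapsto(\alpha\circ\zeta^{\mathfrak f}\otimes\zeta^{\mathfrak f})(\Delta_{\mathrm{Gon}}(w))$, where $\Delta_{\mathrm{Gon}}(\varepsilon_1\cdots\varepsilon_n)=\sum_k\sum_{0<i_1<\dots<i_k<n+1}\big(\mathop{ш}_{p=0}^kI(\varepsilon_{i_p};\varepsilon_{i_p+1}\cdots\varepsilon_{i_{p+1}-1};\varepsilon_{i_{p+1}})\big)\otimes\varepsilon_{i_1}\cdots\varepsilon_{i_k}$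 ($i_0=0,i_{k+1}=n+1,\varepsilon_0=x_1,\varepsilon_{n+1}=x_0$; $I(x_1;f;x_0)=f$, $I(x_0;f;x_1)=S(f)$, $S(\varepsilon_1\cdots\varepsilon_m)=(-1)^m\varepsilon_m\cdots\varepsilon_1$, $I(\varepsilon;f;\varepsilon)$ = coefficient of $\mathbf1$ in $f$ times $\mathbf1$). $\mathcal L^{\mathfrak f}=\mathcal A^{\mathfrak f}_{>0}/(\mathcal A^{\mathfrak f}_{>0})^2$, $\pi_{2r+1}:\mathcal A^{\mathfrak f}_{>0}\to\mathcal L^{\mathfrak f}_{2r+1}$ the projection, and $D_{2r+1}=(\pi_{2r+1}\otimes\mathrm{id})\circ(\Delta_{\mathrm{Gon}}-\mathbf1\otimes\mathrm{id}):\mathcal Z^{\mathfrak f}\to\mathcal L^{\mathfrak f}_{2r+1}\otimes\mathcal Z^{\mathfrak f}$. *)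

From mathcomp Require Import all_boot all_algebra.
Set Implicit Arguments. Unset Strict Implicit. Unset Printing Implicit Defensive.
Import GRing.Theory.
Local Open Scope ring_scope.

(* Letters: x0 = false, x1 = true.  Words = seq bool, weight = size. *)
Definition x0 : bool := false.
Definition x1 : bool := true.
Definition word := seq bool.

(* Elements of Q<X>: finite formal Q-linear combinations of words, given by a
   list of terms; two lists denote the same polynomial iff they have the same
   coefficient function [coef]. *)
Definition poly := seq (rat * word).
Definition coef (p : poly) (w : word) : rat := \sum_(t <- p | t.2 == w) t.1.
Definition pword (w : word) : poly := [:: (1, w)].
Definition pone : poly := pword [::].
Definition pscale (c : rat) (p : poly) : poly := [seq (c * t.1, t.2) | t <- p].
Definition padd (p q : poly) : poly := p ++ q.
Definition psub (p q : poly) : poly := p ++ pscale (-1) q.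
Definition psum (ps : seq poly) : poly := flatten ps.

Fixpoint shw (u v : word) : seq word :=
  match u with
  | [::] => [:: v]
  | a :: u' =>
    let fix aux (v : word) : seq word :=
        match v with
        | [::] => [:: u]
        | b :: v' => map (cons a) (shw u' v) ++ map (cons b) (aux v')
        end in aux v
  end.
Definition pshuffle (p q : poly) : poly :=
  flatten [seq [seq (s.1 * t.1, w) | w <- shw s.2 t.2] | s <- p, t <- q].

(* stuffle product on words in the letters y_k (seq nat) *)
Fixpoint stuffle (u v : seq nat) : seq (seq nat) :=
  match u with
  | [::] => [:: v]
  | i :: u' =>
    let fix aux (v : seq nat) : seq (seq nat) :=
        match v with
        | [::] => [:: u]
        | j :: v' => map (cons i) (stuffle u' v) ++ map (cons j) (aux v')
                     ++ map (cons (i + j)%N) (stuffle u' v')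
        end in aux v
  end.

Definition iotaw (ks : seq nat) : word :=
  flatten [seq rcons (nseq k.-1 x0) x1 | k <- ks].
(* inverse of iota on words in Q1 + Q<X> x1 *)
Fixpoint iotainv_aux (c : nat) (w : word) : seq nat :=
  match w with
  | [::] => [::]
  | b :: w' => if b then c.+1 :: iotainv_aux 0 w' else iotainv_aux c.+1 w'
  end.
Definition iotainv (w : word) : seq nat := iotainv_aux 0 w.

Definition pstuffle_iota (p q : poly) : poly :=
  flatten [seq [seq (s.1 * t.1, iotaw k) | k <- stuffle (iotainv s.2) (iotainv t.2)]
          | s <- p, t <- q].

Definition conv_word (w : word) : bool :=
  (w == [::]) || ((head x1 w == x0) && (last x0 w == x1)).
Definition adm_word (w : word) : bool := (w == [::]) || (last x0 w == x1).
Definition poly_in (P : word -> bool) (p : poly) : Prop :=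
  forall t, t \in p -> P t.2.

Definition lincomb (l : seq (rat * poly)) : poly :=
  psum [seq pscale x.1 x.2 | x <- l].
Definition inspan (S : poly -> Prop) (f : poly) : Prop :=
  exists l : seq (rat * poly), (forall x, x \in l -> S x.2) /\
    forall w, coef f w = coef (lincomb l) w.
Definition shideal (G : poly -> Prop) (f : poly) : Prop :=
  inspan (fun h => exists g u, G g /\ h = pshuffle g (pword u)) f.

Definition R_gens (g : poly) : Prop :=
  g = pword [:: x0] \/ g = pword [:: x1] \/
  exists u v, poly_in conv_word u /\ poly_in adm_word v /\
    g = psub (pshuffle u v) (pstuffle_iota u v).
Definition Rideal : poly -> Prop := shideal R_gens.

(* zeta^f(k1,...,kd) is the class of iotaw [:: k1; ...; kd] *)
Definition zetaw (ks : seq nat) : poly := pword (iotaw ks).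

(* Kernel of Q<X> -> Z^f -> A^f = Z^f/(zeta^f(2)) -> L^f_n, where the last
   arrow is pi_n on A^f_{>0} (extended by 0 on the weight-0 part A^f_0 = Q):
   spanned by the ideal generated by R and zeta(2) = x0 x1, by products of
   two positive-weight polynomials, and by the words of weight different
   from n. *)
Definition pos_word (w : word) : bool := (0 < size w)%N.
Definition A_gens (g : poly) : Prop := R_gens g \/ g = pword [:: x0; x1].
Definition Lker (n : nat) (f : poly) : Prop :=
  inspan (fun h =>
    (exists g u, A_gens g /\ h = pshuffle g (pword u)) \/
    (exists u v, poly_in pos_word u /\ poly_in pos_word v /\ h = pshuffle u v) \/
    (exists w : word, size w <> n /\ h = pword w)) f.

Definition tpoly := seq (rat * (word * word)).
Definition tcoef (t : tpoly) (ww : word * word) : rat :=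
  \sum_(s <- t | s.2 == ww) s.1.
Definition tensor (p q : poly) : tpoly :=
  [seq (s.1 * t.1, (s.2, t.2)) | s <- p, t <- q].
Definition tsub (t u : tpoly) : tpoly :=
  t ++ [seq (- s.1, s.2) | s <- u].
Definition tlincomb (l : seq (rat * tpoly)) : tpoly :=
  flatten [seq [seq (x.1 * s.1, s.2) | s <- x.2] | x <- l].
Definition tinspan (S : tpoly -> Prop) (t : tpoly) : Prop :=
  exists l : seq (rat * tpoly), (forall x, x \in l -> S x.2) /\
    forall ww, tcoef t ww = tcoef (tlincomb l) ww.
(* Kernel of Q<X> (x) Q<X> -> L^f_n (x) Z^f :  Lker n (x) Q<X> + Q<X> (x) R *)
Definition TKer (n : nat) (t : tpoly) : Prop :=
  tinspan (fun h =>
    (exists f u, Lker n f /\ h = tensor f (pword u)) \/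
    (exists u g, Rideal g /\ h = tensor (pword u) g)) t.
(* equality in L^f_n (x) Z^f of the images of two tensors *)
Definition eqLZ (n : nat) (t u : tpoly) : Prop := TKer n (tsub t u).

Definition Iint (a : bool) (f : word) (b : bool) : poly :=
  if a == b then (if f is [::] then pone else [::])
  else if a then pword f
  else [:: ((-1) ^+ size f, rev f)].           (* I(x0; f; x1) = S(f) *)
Fixpoint masks (n : nat) : seq bitseq :=
  match n with
  | 0 => [:: [::]]
  | n'.+1 => [seq b :: m | b <- [:: false; true], m <- masks n']
  end.
Definition gon_left (w : word) (m : bitseq) : poly :=
  let n := size w in
  let e := x1 :: rcons w x0 in
  let pts := 0%N :: rcons [seq i.+1 | i <- iota 0 n & nth false m i] n.+1 in
  foldr (fun pq acc =>
           pshuffle (Iint (nth x0 e pq.1) (drop pq.1.+1 (take pq.2 e)) (nth x0 e pq.2)) acc)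
        pone (zip pts (behead pts)).
Definition DeltaGon (w : word) : tpoly :=
  flatten [seq [seq (t.1, (t.2, mask m w)) | t <- gon_left w m] | m <- masks (size w)].
(* representative of (Delta_Gon - 1 (x) id)(w); D_{2r+1} is its image in
   L^f_{2r+1} (x) Z^f *)
Definition Dpre (w : word) : tpoly := tsub (DeltaGon w) (tensor pone (pword w)).

Definition z2a32b (a b : nat) : poly := zetaw (nseq a 2%N ++ 3%N :: nseq b 2%N).
Definition ind (P : bool) : rat := if P then 1 else 0.
Definition xi (r a b : nat) : poly :=
  padd (padd
    (psum [seq z2a32b al (r.-1 - al) | al <- iota 0 r & (al <= a)%N && (r.-1 - al <= b)%N])
    (pscale (-1)
      (psum [seq z2a32b (r.-1 - al) al | al <- iota 0 r & (al < a)%N && (r.-1 - al <= b)%N])))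
    (pscale (2 * (ind (r <= a)%N - ind (r <= b)%N))
      (psum [seq pscale ((-1) ^+ i) (pshuffle (zetaw [:: (2 * i).+1]) (zetaw (nseq (r - i) 2%N)))
            | i <- iota 1 r])).

From Pilot Require Import Defs.
From mathcomp Require Import all_boot all_algebra zify ring.
Set Implicit Arguments. Unset Strict Implicit. Unset Printing Implicit Defensive.
Import GRing.Theory.

(* Modulo products of positive-weight elements, zeta(2), the relations R and words
   of weight other than n = 2r+1, the only terms of the Goncharov coaction of a word
   that survive are those cutting out a single block of n consecutive letters.
   For iota({2}^a,3,{2}^b) = (x0 x1)^a x0 x0 x1 (x0 x1)^b such a block gives a nonzero
   iterated integral only if it contains the defect x0 x0; the remaining letters are
   then (x0 x1)^(a+b+1-r), and the block reads zeta({2}^al,3,{2}^be) forwards (even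
   start) or backwards up to sign (odd start), except for the blocks beginning or
   ending at the defect, which give the non-admissible word (x0 x1)^r x0, counted
   1(r <= a) - 1(r <= b) times.  Finally x0 ш (x0 x1)^r in R and the stuffle
   relations for zeta(c) zeta({2}^m) show (x0 x1)^r x0 == 2 (-1)^r zeta(2r+1), which
   is 2 sum_i (-1)^i zeta(2i+1) zeta({2}^(r-i)) modulo products. *)

Section Coefficients.
Local Open Scope ring_scope.

Lemma coef_nil w : coef [::] w = 0.
Proof. by rewrite /coef big_nil. Qed.

Lemma coef_cons_term t p w : coef (t :: p) w = (if t.2 == w then t.1 else 0) + coef p w.
Proof. by rewrite /coef big_cons; case: (t.2 == w); rewrite ?add0r. Qed.

Lemma coef_cat p q w : coef (p ++ q) w = coef p w + coef q w.
Proof. by rewrite /coef big_cat. Qed.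

Lemma coef_flatten ps w : coef (flatten ps) w = \sum_(p <- ps) coef p w.
Proof. by rewrite /coef big_flatten. Qed.

Lemma coef_psum ps w : coef (psum ps) w = \sum_(p <- ps) coef p w.
Proof. exact: coef_flatten. Qed.

Lemma coef_map_terms (T : Type) (s : seq T) (f : T -> rat * word) w :
  coef (map f s) w = \sum_(x <- s | (f x).2 == w) (f x).1.
Proof. by rewrite /coef big_map. Qed.

Lemma coef_pscale c p w : coef (pscale c p) w = c * coef p w.
Proof. by rewrite /pscale coef_map_terms /coef mulr_sumr. Qed.

Lemma coef_pword u w : coef (pword u) w = (u == w)%:R.
Proof. by rewrite /pword coef_cons_term coef_nil addr0 /=; case: (u == w). Qed.

Lemma coef_padd p q w : coef (padd p q) w = coef p w + coef q w.
Proof. exact: coef_cat. Qed.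

Lemma coef_psub p q w : coef (psub p q) w = coef p w - coef q w.
Proof. by rewrite /psub coef_cat coef_pscale mulN1r. Qed.

Lemma coef_lincomb l w : coef (lincomb l) w = \sum_(x <- l) x.1 * coef x.2 w.
Proof. by rewrite /lincomb coef_psum big_map; apply: eq_bigr => x _; apply: coef_pscale. Qed.

Lemma tcoef_nil ww : tcoef [::] ww = 0.
Proof. by rewrite /tcoef big_nil. Qed.

Lemma tcoef_cat t u ww : tcoef (t ++ u) ww = tcoef t ww + tcoef u ww.
Proof. by rewrite /tcoef big_cat. Qed.

Lemma tcoef_flatten ts ww : tcoef (flatten ts) ww = \sum_(t <- ts) tcoef t ww.
Proof. by rewrite /tcoef big_flatten. Qed.

Lemma tcoef_map_terms (T : Type) (s : seq T) (f : T -> rat * (word * word)) ww :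
  tcoef (map f s) ww = \sum_(x <- s | (f x).2 == ww) (f x).1.
Proof. by rewrite /tcoef big_map. Qed.

Lemma tcoef_opp t ww : tcoef [seq (- s.1, s.2) | s <- t] ww = - tcoef t ww.
Proof. by rewrite tcoef_map_terms /tcoef (big_morph _ (@opprD _) (@oppr0 _)). Qed.

Lemma tcoef_tsub t u ww : tcoef (tsub t u) ww = tcoef t ww - tcoef u ww.
Proof. by rewrite /tsub tcoef_cat tcoef_opp. Qed.

Lemma tcoef_tensor p q ww : tcoef (tensor p q) ww = coef p ww.1 * coef q ww.2.
Proof.
case: ww => u v /=; rewrite /coef [X in _ = X * _]big_mkcond big_distrl.
rewrite /tensor /tcoef big_mkcond big_allpairs_dep /=.
apply: eq_bigr => s _; rewrite [X in _ = _ * X]big_mkcond big_distrr /=.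
apply: eq_bigr => t _ /=; rewrite xpair_eqE.
by case: (s.2 == u); case: (t.2 == v); rewrite /= ?mulr0 ?mul0r.
Qed.

Lemma tcoef_flatten_tensor_r (I : Type) (s : seq I) (f : I -> Defs.poly) q ww :
  tcoef (flatten [seq tensor (f i) q | i <- s]) ww = tcoef (tensor (psum (map f s)) q) ww.
Proof.
rewrite tcoef_flatten big_map tcoef_tensor coef_psum big_map mulr_suml.
by apply: eq_bigr => i _; rewrite tcoef_tensor.
Qed.

Lemma tcoef_tlincomb l ww : tcoef (tlincomb l) ww = \sum_(x <- l) x.1 * tcoef x.2 ww.
Proof.
rewrite /tlincomb tcoef_flatten big_map; apply: eq_bigr => x _.
by rewrite tcoef_map_terms /tcoef mulr_sumr.
Qed.

End Coefficients.

Section Span.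
Local Open Scope ring_scope.
Variable S : Defs.poly -> Prop.

Lemma inspan_coef_eq f g : coef f =1 coef g -> inspan S g -> inspan S f.
Proof. by move=> e [l [Hl He]]; exists l; split=> // w; rewrite e. Qed.

Lemma inspan_nil : inspan S [::].
Proof. by exists [::]; split => // w; rewrite coef_nil coef_lincomb big_nil. Qed.

Lemma inspan_cat f g : inspan S f -> inspan S g -> inspan S (f ++ g).
Proof.
move=> [l1 [H1 E1]] [l2 [H2 E2]]; exists (l1 ++ l2); split.
  by move=> x; rewrite mem_cat => /orP[]; [exact: H1 | exact: H2].
by move=> w; rewrite coef_cat !coef_lincomb big_cat /= E1 E2 !coef_lincomb.
Qed.

Lemma inspan_scale c f : inspan S f -> inspan S (pscale c f).
Proof.
move=> [l [H E]]; exists [seq (c * x.1, x.2) | x <- l]; split.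
  by move=> x /mapP [y Hy ->]; exact: H y Hy.
move=> w; rewrite coef_pscale E !coef_lincomb big_map mulr_sumr.
by apply: eq_bigr => x _ /=; rewrite mulrA.
Qed.

Lemma inspan_psub f g : inspan S f -> inspan S g -> inspan S (psub f g).
Proof. by move=> Hf Hg; apply: inspan_cat => //; apply: inspan_scale. Qed.

Lemma inspan_gen h : S h -> inspan S h.
Proof.
move=> Hh; exists [:: (1, h)]; split; first by move=> x; rewrite inE => /eqP ->.
by move=> w; rewrite coef_lincomb big_cons big_nil mul1r addr0.
Qed.

Lemma inspan_flatten ps : (forall p, p \in ps -> inspan S p) -> inspan S (flatten ps).
Proof.
elim: ps => [|p ps IH] H /=; first exact: inspan_nil.
apply: inspan_cat; first by apply: H; rewrite mem_head.
by apply: IH => q Hq; apply: H; rewrite inE Hq orbT.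
Qed.

End Span.

Section TensorSpan.
Local Open Scope ring_scope.
Variable S : tpoly -> Prop.

Lemma tinspan_tcoef_eq t u : tcoef t =1 tcoef u -> tinspan S u -> tinspan S t.
Proof. by move=> e [l [Hl He]]; exists l; split=> // w; rewrite e. Qed.

Lemma tinspan_nil : tinspan S [::].
Proof. by exists [::]; split => // w; rewrite tcoef_nil tcoef_tlincomb big_nil. Qed.

Lemma tinspan_cat t u : tinspan S t -> tinspan S u -> tinspan S (t ++ u).
Proof.
move=> [l1 [H1 E1]] [l2 [H2 E2]]; exists (l1 ++ l2); split.
  by move=> x; rewrite mem_cat => /orP[]; [exact: H1 | exact: H2].
by move=> w; rewrite tcoef_cat !tcoef_tlincomb big_cat /= E1 E2 !tcoef_tlincomb.
Qed.

Lemma tinspan_gen h : S h -> tinspan S h.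
Proof.
move=> Hh; exists [:: (1, h)]; split; first by move=> x; rewrite inE => /eqP ->.
by move=> w; rewrite tcoef_tlincomb big_cons big_nil mul1r addr0.
Qed.

Lemma tinspan_flatten ts : (forall t, t \in ts -> tinspan S t) -> tinspan S (flatten ts).
Proof.
elim: ts => [|t ts IH] H /=; first exact: tinspan_nil.
apply: tinspan_cat; first by apply: H; rewrite mem_head.
by apply: IH => u Hu; apply: H; rewrite inE Hu orbT.
Qed.

Lemma tinspan_opp t : tinspan S t -> tinspan S [seq (- s.1, s.2) | s <- t].
Proof.
move=> [l [H E]]; exists [seq (- x.1, x.2) | x <- l]; split.
  by move=> x /mapP [y Hy ->]; exact: H y Hy.
move=> w; rewrite tcoef_opp E !tcoef_tlincomb big_map.
by rewrite (big_morph _ (@opprD _) (@oppr0 _)); apply: eq_bigr => x _ /=; rewrite mulNr.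
Qed.

Lemma tinspan_tsub t u : tinspan S t -> tinspan S u -> tinspan S (tsub t u).
Proof. by move=> Ht Hu; apply: tinspan_cat => //; apply: tinspan_opp. Qed.

End TensorSpan.

Lemma shw_nil_r u : shw u [::] = [:: u].
Proof. by case: u. Qed.

Lemma shw_cons a u b v :
  shw (a :: u) (b :: v) = map (cons a) (shw u (b :: v)) ++ map (cons b) (shw (a :: u) v).
Proof. by []. Qed.

Lemma size_shw u v x : x \in shw u v -> size x = (size u + size v)%N.
Proof.
elim: u v x => [|a u IHu] v x; first by rewrite inE => /eqP ->.
elim: v x => [|b v IHv] x; first by rewrite shw_nil_r inE => /eqP ->; rewrite addn0.
rewrite shw_cons mem_cat => /orP [] /mapP [y Hy ->] /=; first by rewrite (IHu _ _ Hy).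
by rewrite (IHv _ Hy) /= addnS.
Qed.

Lemma shw_letter a v : shw [:: a] v = [seq take k v ++ a :: drop k v | k <- iota 0 (size v).+1].
Proof.
elim: v => [|b v IH] //; rewrite shw_cons IH /=.
have -> : iota 2 (size v) = map S (iota 1 (size v)) by rewrite -(iotaDl 1).
by do 2 congr (_ :: _); rewrite -!map_comp; apply: eq_map.
Qed.

Section ShuffleProduct.
Local Open Scope ring_scope.

Lemma pshuffle_pone_l q : pshuffle pone q = q.
Proof.
rewrite /pshuffle /pone /pword /= cats0.
by elim: q => [|[c w] q IH] //=; rewrite mul1r IH.
Qed.

Lemma pshuffle_pone_r p : pshuffle p pone = p.
Proof.
rewrite /pshuffle /pone /pword.
by elim: p => [|[c w] p IH] //=; rewrite shw_nil_r /= mulr1 IH.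
Qed.

Lemma pshuffle_pword u v : pshuffle (pword u) (pword v) = [seq (1 * 1, x) | x <- shw u v].
Proof. by rewrite /pshuffle /pword /= cats0. Qed.

Lemma size_pshuffle p q k l :
  (forall s, s \in p -> size s.2 = k) -> (forall t, t \in q -> size t.2 = l) ->
  forall x, x \in pshuffle p q -> size x.2 = (k + l)%N.
Proof.
move=> Hp Hq x /flattenP [y /allpairsP [[s t] /= [Hs Ht ->]]] /mapP [v Hv ->] /=.
by rewrite (size_shw Hv) (Hp _ Hs) (Hq _ Ht).
Qed.

End ShuffleProduct.

Section LkerGenerators.
Variable n : nat.

Lemma Lker_off_weight p : (forall t, t \in p -> size t.2 <> n) -> Lker n p.
Proof.
move=> H; exists [seq (t.1, pword t.2) | t <- p]; split.
  by move=> x /mapP [t Ht ->] /=; right; right; exists t.2; split=> //; exact: H.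
move=> w; rewrite coef_lincomb big_map (eq_bigr (fun t => t.1 * (t.2 == w)%:R)%R).
  by rewrite /coef big_mkcond /=; apply: eq_bigr => t _; case: (t.2 == w); rewrite ?mulr1 ?mulr0.
by move=> t _; rewrite coef_pword.
Qed.

Lemma Lker_pshuffle_pos u v : poly_in pos_word u -> poly_in pos_word v -> Lker n (pshuffle u v).
Proof. by move=> Hu Hv; apply: inspan_gen; right; left; exists u, v. Qed.

Lemma Lker_A_gens g u : A_gens g -> Lker n (pshuffle g (pword u)).
Proof. by move=> Hg; apply: inspan_gen; left; exists g, u. Qed.

Lemma Lker_R_gens g : R_gens g -> Lker n g.
Proof.
move=> Hg; apply: (@inspan_coef_eq _ _ (pshuffle g (pword [::]))).
  by move=> w; rewrite pshuffle_pone_r.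
by apply: Lker_A_gens; left.
Qed.

End LkerGenerators.

Section LkerCoef.
Local Open Scope ring_scope.
Variable n : nat.

Definition Lker_coef (phi : word -> rat) := exists2 p, Lker n p & coef p =1 phi.

Lemma Lker_coefP p : Lker_coef (coef p) <-> Lker n p.
Proof.
split=> [[q Hq Eq] | Hp]; last by exists p.
by apply: inspan_coef_eq Hq => w; rewrite Eq.
Qed.

Lemma Lker_coef_ext phi psi : phi =1 psi -> Lker_coef psi -> Lker_coef phi.
Proof. by move=> E [p Hp Ep]; exists p => // w; rewrite Ep E. Qed.

Lemma Lker_coef0 : Lker_coef (fun=> 0).
Proof. by exists [::]; [exact: inspan_nil | exact: coef_nil]. Qed.

Lemma Lker_coefD phi psi : Lker_coef phi -> Lker_coef psi -> Lker_coef (fun w => phi w + psi w).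
Proof.
move=> [p Hp Ep] [q Hq Eq]; exists (p ++ q); first exact: inspan_cat.
by move=> w; rewrite coef_cat Ep Eq.
Qed.

Lemma Lker_coefZ c phi : Lker_coef phi -> Lker_coef (fun w => c * phi w).
Proof.
move=> [p Hp Ep]; exists (pscale c p); first exact: inspan_scale.
by move=> w; rewrite coef_pscale Ep.
Qed.

End LkerCoef.

Section ShuffleFold.
Variables (J : nat * nat -> Defs.poly) (weight : nat * nat -> nat).
Hypothesis J_empty : forall pq, weight pq = 0%N -> J pq = pone.
Hypothesis size_J : forall pq t, t \in J pq -> size t.2 = weight pq.

Definition pshuffle_fold (P : seq (nat * nat)) : Defs.poly :=
  foldr (fun pq acc => pshuffle (J pq) acc) pone P.

Let pos_weight := fun pq => (0 < weight pq)%N.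

Lemma size_pshuffle_fold P t : t \in pshuffle_fold P -> size t.2 = (\sum_(pq <- P) weight pq)%N.
Proof.
elim: P t => [|pq P IH] t /=; first by rewrite inE => /eqP ->; rewrite big_nil.
by rewrite big_cons; apply: size_pshuffle => //; exact: size_J.
Qed.

Lemma J_nonpos pq : ~~ pos_weight pq -> J pq = pone.
Proof. by rewrite /pos_weight lt0n negbK => /eqP; exact: J_empty. Qed.

Lemma pshuffle_fold_pone P : filter pos_weight P = [::] -> pshuffle_fold P = pone.
Proof.
elim: P => [|pq P IH] //=; case: ifP => // /negbT Hpq /IH ->.
by rewrite J_nonpos ?pshuffle_pone_l.
Qed.

Lemma pshuffle_fold_single P pq0 : filter pos_weight P = [:: pq0] -> pshuffle_fold P = J pq0.
Proof.
elim: P => [|pq P IH] //=; case: ifP => [_ [<-] /pshuffle_fold_pone -> | /negbT Hpq /IH ->].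
  by rewrite pshuffle_pone_r.
by rewrite J_nonpos ?pshuffle_pone_l.
Qed.

Lemma Lker_pshuffle_fold n P : (1 < size (filter pos_weight P))%N -> Lker n (pshuffle_fold P).
Proof.
elim: P => [|pq P IH] //=; case: ifP => [Hpq HP | /negbT Hpq /IH]; last first.
  by rewrite J_nonpos ?pshuffle_pone_l.
apply: Lker_pshuffle_pos => t Ht; rewrite /pos_word; first by rewrite (size_J Ht).
rewrite (size_pshuffle_fold Ht) lt0n sum_nat_seq_neq0.
have : has pos_weight P by rewrite has_filter -size_eq0 -lt0n.
by apply: sub_has => pq'; rewrite /pos_weight lt0n.
Qed.

End ShuffleFold.

(* The pairs (i_p, i_(p+1)) of consecutive kept positions of the framed word
   x1 w x0 under the mask m, as in the formula for Delta_Gon. *)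
Fixpoint gaps (p : nat) (m : bitseq) (k : nat) : seq (nat * nat) :=
  match m with
  | [::] => [:: (p, k)]
  | true :: m' => (p, k) :: gaps k m' k.+1
  | false :: m' => gaps p m' k.+1
  end.

Definition mask_pos (m : bitseq) k := [seq (i + k)%N | i <- iota 0 (size m) & nth false m i].

Definition gap_len (pq : nat * nat) : nat := pq.2 - pq.1.+1.

Definition positive_gaps (m : bitseq) := filter (fun pq => 0 < gap_len pq)%N (gaps 0 m 1).

Lemma mask_pos_cons b m k :
  mask_pos (b :: m) k = if b then k :: mask_pos m k.+1 else mask_pos m k.+1.
Proof.
have E : [seq (i + k)%N | i <- iota 1 (size m) & nth false (b :: m) i] = mask_pos m k.+1.
  have -> : iota 1 (size m) = map (addn 1) (iota 0 (size m)) by rewrite -iotaDl.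
  rewrite filter_map -map_comp (@eq_filter _ _ (nth false m)); last by move=> i; rewrite /= ?add1n.
  by apply: eq_map => i /=; lia.
by rewrite /mask_pos /=; move: E; case: b => /= ->.
Qed.

Lemma zip_mask_pos m p k :
  let s := rcons (mask_pos m k) (k + size m) in zip (p :: s) s = gaps p m k.
Proof.
elim: m p k => [|b m IH] p k /=; first by rewrite /mask_pos /= addn0.
by rewrite mask_pos_cons; case: b => /=; rewrite -IH addSnnS.
Qed.

Lemma gaps_head p m k : exists y rest, gaps p m k = (p, y) :: rest /\ (k <= y)%N.
Proof.
elim: m p k => [|[] m IH] p k /=; first by exists k, [::].
  by exists k, (gaps k m k.+1).
by have [y [rest [-> Hy]]] := IH p k.+1; exists y, rest; split => //; apply: ltnW.
Qed.

Lemma gaps_bounds p m k : (p < k)%N ->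
  all (fun pq => (p <= pq.1) && (pq.2 <= k + size m))%N (gaps p m k).
Proof.
elim: m p k => [|[] m IH] p k Hpk /=; first by rewrite leqnn addn0 leqnn.
  rewrite leqnn /= leq_addr /=; apply: sub_all (IH k k.+1 (ltnSn k)) => pq /andP [H1 H2].
  by apply/andP; split; lia.
by apply: sub_all (IH p k.+1 (leqW Hpk)) => pq /andP [H1 H2]; apply/andP; split; lia.
Qed.

Lemma gaps_cat_true k j m :
  filter (fun pq => 0 < gap_len pq)%N (gaps k (nseq j true ++ m) k.+1) =
  filter (fun pq => 0 < gap_len pq)%N (gaps (k + j) m (k + j).+1).
Proof.
elim: j k => [|j IH] k /=; first by rewrite addn0.
by rewrite /gap_len /= subnn /= IH addnS.
Qed.

Lemma gaps_cat_false p j k m : gaps p (nseq j false ++ m) k = gaps p m (k + j).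
Proof. by elim: j k => [|j IH] k /=; rewrite ?addn0 // IH addnS. Qed.

Lemma gaps_no_gap k m : filter (fun pq => 0 < gap_len pq)%N (gaps k m k.+1) = [::] ->
  m = nseq (size m) true.
Proof.
elim: m k => [|[] m IH] k //=; first by rewrite /gap_len /= subnn => /IH {1}->.
have [y [rest [-> Hy]]] := gaps_head k m k.+2.
by rewrite /= /gap_len /=; case: ifP => //; lia.
Qed.

Lemma cat_nseq_cons j (b : bool) s : nseq j b ++ b :: s = nseq j.+1 b ++ s.
Proof. by elim: j => //= j ->. Qed.

Lemma gaps_single_gap p m k x y : (p < k)%N ->
  filter (fun pq => 0 < gap_len pq)%N (gaps p m k) = [:: (x, y)] ->
  nseq (k.-1 - p) false ++ m =
  nseq (x - p) true ++ nseq (y - x.+1) false ++ nseq (k + size m - y) true.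
Proof.
elim: m p k => [|[] m IH] p k Hpk /=.
- rewrite /gap_len /=; case: ifP => // H [<- <-].
  have -> : (k.-1 - p = k - p.+1)%N by lia.
  by rewrite subnn addn0 subnn cats0.
- rewrite /gap_len /=; case: ifP => H.
    case=> <- <- /gaps_no_gap Hm.
    have -> : (k.-1 - p = k - p.+1)%N by lia.
    by rewrite subnn /= Hm size_nseq addKn.
  move=> Hf; have Hk : k = p.+1 by lia.
  subst k; rewrite subnn /=.
  have Hx : (x, y) \in gaps p.+1 m p.+2.
    by have := mem_head (x, y) [::]; rewrite -Hf mem_filter => /andP [].
  move: (allP (gaps_bounds m (ltnSn p.+1)) _ Hx) => /= /andP [Hx1 Hy1].
  move: (IH p.+1 p.+2 (ltnSn _) Hf); rewrite subnn /= => E; rewrite [in LHS]E.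
  have -> : (x - p = (x - p.+1).+1)%N by lia.
  by rewrite /= addSnnS.
- move=> Hf; rewrite -addSnnS -(IH p k.+1 (leqW Hpk) Hf) /= cat_nseq_cons.
  by have -> : (k.-1 - p).+1 = (k - p)%N by lia.
Qed.

Definition block_mask (N n i : nat) : bitseq :=
  nseq i true ++ nseq n false ++ nseq (N - n - i) true.

Lemma size_block_mask N n i : (n + i <= N)%N -> size (block_mask N n i) = N.
Proof. by rewrite /block_mask !size_cat !size_nseq; lia. Qed.

Lemma positive_gaps_block_mask N n i : (0 < n)%N ->
  positive_gaps (block_mask N n i) = [:: (i, i + n.+1)].
Proof.
move=> Hn; rewrite /positive_gaps /block_mask gaps_cat_true add0n gaps_cat_false.
have Hlen : (0 < gap_len (i, i + n.+1))%N by rewrite /gap_len /=; lia.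
have -> : (i.+1 + n = i + n.+1)%N by lia.
case: (N - n - i)%N => [|t] /=; rewrite Hlen //.
have := gaps_cat_true (i + n.+1) t [::]; rewrite cats0 /= => ->.
by rewrite /gap_len /= subnn.
Qed.

Lemma block_mask_inj N n i j : (0 < n)%N -> block_mask N n i = block_mask N n j -> i = j.
Proof.
move=> Hn; have index_false k : index false (block_mask N n k) = k.
  rewrite /block_mask index_cat mem_nseq andbF size_nseq index_cat mem_nseq Hn eqxx /=.
  by case: n Hn => //= n _; rewrite addn0.
by move=> E; rewrite -(index_false i) E index_false.
Qed.

Lemma count_mem_masks x N : count_mem x (masks N) = (size x == N).
Proof.
elim: N x => [|N IH] [|c x] //=; rewrite cats0 count_cat !count_map.
- by rewrite !(@eq_count _ _ pred0) ?count_pred0.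
- rewrite eqSS; have E (b : bool) :
    count (preim (cons b) (pred1 (c :: x))) (masks N) = (b == c) * count_mem x (masks N).
    case: (eqVneq b c) => [->|ne] /=.
      by rewrite mul1n; apply: eq_count => m /=; rewrite eqseq_cons eqxx.
    by rewrite mul0n (@eq_count _ _ pred0) ?count_pred0 // => m /=; rewrite eqseq_cons (negbTE ne).
  by rewrite !E IH; move: E; case: c => /= _; rewrite ?mul0n ?mul1n ?addn0.
Qed.

Lemma mem_masks x N : (x \in masks N) = (size x == N).
Proof. by rewrite -has_pred1 has_count count_mem_masks; case: (size x == N). Qed.

Section CongruenceLZ.
Local Open Scope ring_scope.
Variable n : nat.

Lemma TKer_tensor_Lker f u : Lker n f -> TKer n (tensor f (pword u)).
Proof. by move=> Hf; apply: tinspan_gen; left; exists f, u. Qed.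

Lemma eqLZ_trans t u v : eqLZ n t u -> eqLZ n u v -> eqLZ n t v.
Proof.
move=> Htu Huv; apply: tinspan_tcoef_eq (tinspan_cat Htu Huv) => ww.
by rewrite tcoef_cat !tcoef_tsub addrA subrK.
Qed.

Lemma eqLZ_tcoef_l t u v : tcoef t =1 tcoef u -> eqLZ n u v -> eqLZ n t v.
Proof. by move=> E; apply: tinspan_tcoef_eq => ww; rewrite !tcoef_tsub E. Qed.

Lemma eqLZ_tensor_l f g u : Lker n (psub f g) -> eqLZ n (tensor f (pword u)) (tensor g (pword u)).
Proof.
move=> /(TKer_tensor_Lker u); apply: tinspan_tcoef_eq => ww.
by rewrite tcoef_tsub !tcoef_tensor coef_psub mulrBl.
Qed.

End CongruenceLZ.

Definition framed (w : word) : word := x1 :: rcons w x0.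

Definition gap_int (w : word) (pq : nat * nat) : Defs.poly :=
  Iint (nth x0 (framed w) pq.1) (drop pq.1.+1 (take pq.2 (framed w))) (nth x0 (framed w) pq.2).

Definition gap_weight (w : word) (pq : nat * nat) : nat :=
  size (drop pq.1.+1 (take pq.2 (framed w))).

Definition gon_term (w : word) (m : bitseq) : tpoly := tensor (gon_left w m) (pword (mask m w)).

Lemma gap_int_empty w pq : gap_weight w pq = 0%N -> gap_int w pq = pone.
Proof. by rewrite /gap_weight /gap_int /Iint => /size0nil ->; case: ifP => //; case: ifP. Qed.

Lemma size_gap_int w pq t : t \in gap_int w pq -> size t.2 = gap_weight w pq.
Proof.
rewrite /gap_int /gap_weight /Iint; case: ifP => _.
  by case: (drop _ _) => [|? ?]; rewrite ?inE // => /eqP ->.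
by case: ifP => _; rewrite inE => /eqP -> //=; rewrite size_rev.
Qed.

Lemma gap_weight_len w pq : (pq.2 <= size (framed w))%N -> gap_weight w pq = gap_len pq.
Proof. by move=> H; rewrite /gap_weight size_drop size_takel. Qed.

Lemma gon_left_fold w m : size m = size w -> gon_left w m = pshuffle_fold (gap_int w) (gaps 0 m 1).
Proof.
move=> Hs; rewrite /gon_left /pshuffle_fold -(zip_mask_pos m 0 1) /= add1n Hs.
congr (foldr _ _ (zip (0%N :: rcons _ _) (rcons _ _))); rewrite /mask_pos Hs;
  by apply: eq_map => i; rewrite addn1.
Qed.

Lemma mem_gaps_bound m pq : pq \in gaps 0 m 1 -> (pq.2 <= (size m).+1)%N.
Proof. by move/(allP (gaps_bounds m (ltn0Sn 0))) => /andP []. Qed.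

Section GonTerms.
Variable w : word.

Lemma filter_gap_weight m : size m = size w ->
  filter (fun pq => 0 < gap_weight w pq)%N (gaps 0 m 1) = positive_gaps m.
Proof.
move=> Hs; apply: eq_in_filter => pq /mem_gaps_bound Hpq.
by rewrite gap_weight_len // /framed /= size_rcons -Hs; exact: leqW.
Qed.

Lemma size_gon_left m t : size m = size w -> t \in gon_left w m ->
  size t.2 = (\sum_(pq <- positive_gaps m) gap_len pq)%N.
Proof.
move=> Hs; rewrite gon_left_fold // => /(size_pshuffle_fold (@size_gap_int w)) ->.
rewrite -filter_gap_weight // big_filter [RHS]big_mkcond /=; apply: eq_big_seq => pq /mem_gaps_bound Hpq.
rewrite gap_weight_len; last by rewrite /framed /= size_rcons -Hs; exact: leqW.
by case: ifP => // /negbT; rewrite -eqn0Ngt => /eqP.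
Qed.

Lemma gon_term_cases n m : (0 < n)%N -> size m = size w ->
  (exists2 i, (i + n <= size w)%N & m = block_mask (size w) n i) \/ TKer n (gon_term w m).
Proof.
move=> Hn Hs; have off_weight : (\sum_(pq <- positive_gaps m) gap_len pq)%N <> n ->
    TKer n (gon_term w m).
  by move=> Hne; apply/TKer_tensor_Lker/Lker_off_weight => t /(size_gon_left Hs) ->.
case Ef : (positive_gaps m) off_weight => [|[x y] [|pq s]] off_weight.
- by right; apply: off_weight; rewrite big_nil; lia.
- have [Hxy|] := eqVneq (gap_len (x, y)) n; last first.
    by move=> Hne; right; apply: off_weight; rewrite big_seq1; apply/eqP.
  have := gaps_single_gap (ltn0Sn 0) Ef; rewrite /= subn0 add1n => Em.
  have := congr1 size Em; rewrite !size_cat !size_nseq Hs => Hsz.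
  left; exists x; rewrite /gap_len /= in Hxy; first by lia.
  by rewrite Em /block_mask -Hxy; congr (_ ++ _ ++ nseq _ _); lia.
- right; apply/TKer_tensor_Lker; rewrite gon_left_fold //.
  apply: (Lker_pshuffle_fold (@gap_int_empty w) (@size_gap_int w)).
  by rewrite filter_gap_weight // Ef.
Qed.

Lemma gon_term_block_mask n i : (0 < n)%N -> (i + n <= size w)%N ->
  gon_term w (block_mask (size w) n i) =
  tensor (gap_int w (i, i + n.+1)) (pword (take i w ++ drop (i + n) w)).
Proof.
move=> Hn Hi; have Hs : size (block_mask (size w) n i) = size w by rewrite size_block_mask // addnC.
rewrite /gon_term gon_left_fold // (pshuffle_fold_single (@gap_int_empty w) (pq0 := (i, i + n.+1))).
  congr (tensor _ (pword _)).
  have E : w = take i w ++ (take n (drop i w) ++ drop (i + n) w) by rewrite addnC -drop_drop !cat_take_drop.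
  rewrite {2}E /block_mask mask_cat ?size_nseq ?size_take; last by case: ifP => //; lia.
  rewrite mask_cat ?size_nseq ?size_take ?size_drop; last by case: ifP => //; lia.
  rewrite mask_false mask_true ?size_take; last by case: ifP => //; lia.
  by rewrite mask_true // size_drop; lia.
by rewrite filter_gap_weight // positive_gaps_block_mask.
Qed.

End GonTerms.

Section SeqSums.
Local Open Scope ring_scope.
Variable R : nmodType.

Lemma big_pred1_uniq (T : eqType) (r : seq T) (i0 : T) (F : T -> R) :
  uniq r -> i0 \in r -> \sum_(i <- r | i == i0) F i = F i0.
Proof.
move=> Hu Hi; rewrite (eq_bigr (fun=> F i0)) => [|i /eqP -> //].
by rewrite big_const_seq -/(count_mem i0 r) count_uniq_mem // Hi /= addr0.
Qed.

Lemma sumr_const_count (T : eqType) (r : seq T) (x : T) (c : R) :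
  \sum_(m <- r | m == x) c = c *+ count_mem x r.
Proof. by rewrite big_const_seq; elim: (count _ _) => //= k ->; rewrite mulrS. Qed.

End SeqSums.

Lemma tcoef_DeltaGon w ww :
  tcoef (DeltaGon w) ww = (\sum_(m <- masks (size w)) tcoef (gon_term w m) ww)%R.
Proof.
rewrite /DeltaGon tcoef_flatten big_map; apply: eq_bigr => m _.
rewrite tcoef_map_terms tcoef_tensor coef_pword /coef mulr_suml; case: ww => u v /=.
rewrite big_mkcond [RHS]big_mkcond /=; apply: eq_bigr => t _.
by rewrite xpair_eqE; case: (t.2 == u); case: (mask m w == v); rewrite /= ?mulr1 ?mulr0.
Qed.

Definition block_sum (w : word) (n : nat) : tpoly :=
  flatten [seq gon_term w (block_mask (size w) n i) | i <- iota 0 (size w - n).+1].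

Section BlockReduction.
Local Open Scope ring_scope.
Variables (w : word) (n : nat).
Hypotheses (n_gt0 : (0 < n)%N) (n_le_size : (n <= size w)%N).

Let starts := iota 0 (size w - n).+1.

Definition block_part (m : bitseq) : tpoly :=
  flatten [seq if m == block_mask (size w) n i then gon_term w (block_mask (size w) n i) else [::]
          | i <- starts].

Lemma tcoef_block_part m ww : tcoef (block_part m) ww =
  \sum_(i <- starts | m == block_mask (size w) n i) tcoef (gon_term w (block_mask (size w) n i)) ww.
Proof.
rewrite /block_part tcoef_flatten big_map [RHS]big_mkcond; apply: eq_bigr => i _.
by case: ifP; rewrite ?tcoef_nil.
Qed.

Lemma mem_starts i : (i \in starts) = (i + n <= size w)%N.
Proof. by rewrite mem_iota; lia. Qed.

Lemma TKer_gon_term_sub_block_part m : m \in masks (size w) ->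
  TKer n (tsub (gon_term w m) (block_part m)).
Proof.
rewrite mem_masks => /eqP Hs.
have [/hasP [i0 Hi0 /eqP Em] | /hasPn Hnot] := boolP (has (fun i => m == block_mask (size w) n i) starts).
  apply: tinspan_tcoef_eq (tinspan_nil _) => ww.
  rewrite tcoef_tsub tcoef_nil (tcoef_block_part m ww) Em (eq_bigl (pred1 i0)) => [|i]; last first.
    by apply/eqP/eqP => [/block_mask_inj -> // | ->].
  by rewrite big_pred1_uniq ?iota_uniq // subrr.
case: (gon_term_cases n_gt0 Hs) => [[i Hi Em] | HT].
  by move: (Hnot i); rewrite mem_starts Em eqxx => /(_ Hi).
apply: tinspan_tcoef_eq HT => ww; rewrite tcoef_tsub (tcoef_block_part m ww) big1_seq ?subr0 //.
by move=> i /andP [Em Hi]; move: (Hnot i Hi); rewrite Em.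
Qed.

Lemma sum_block_part ww :
  \sum_(m <- masks (size w)) tcoef (block_part m) ww = tcoef (block_sum w n) ww.
Proof.
rewrite /block_sum tcoef_flatten big_map; under [in LHS]eq_bigr do rewrite tcoef_block_part.
rewrite (exchange_big_dep xpredT) //=; apply: eq_big_seq => i; rewrite mem_starts => Hi.
by rewrite sumr_const_count count_mem_masks size_block_mask ?eqxx ?mulr1n // addnC.
Qed.

Lemma Dpre_block_sum : eqLZ n (Dpre w) (block_sum w n).
Proof.
pose T := flatten [seq tsub (gon_term w m) (block_part m) | m <- masks (size w)] ++
          tsub [::] (tensor pone (pword w)).
have HT : TKer n T.
  apply: tinspan_cat.
    by apply: tinspan_flatten => t /mapP [m Hm ->]; exact: TKer_gon_term_sub_block_part.
  apply: tinspan_tsub; first exact: tinspan_nil.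
  by apply/TKer_tensor_Lker/Lker_off_weight => t; rewrite inE => /eqP -> /=; lia.
apply: tinspan_tcoef_eq HT => ww.
rewrite /T tcoef_cat !tcoef_tsub tcoef_flatten big_map tcoef_nil.
rewrite tcoef_DeltaGon -sum_block_part.
under [in RHS]eq_bigr do rewrite tcoef_tsub.
by rewrite big_split /= sumrN; ring.
Qed.

End BlockReduction.

Definition flip_word (c L : nat) : word := mkseq (fun k => if k <= c then odd k else ~~ odd k)%N L.

Lemma size_flip_word c L : size (flip_word c L) = L.
Proof. exact: size_mkseq. Qed.

Lemma nth_flip_word c L k : (k < L)%N ->
  nth x0 (flip_word c L) k = if (k <= c)%N then odd k else ~~ odd k.
Proof. exact: nth_mkseq. Qed.

Lemma eq_word_nth (u v : word) :
  size u = size v -> (forall k, (k < size u)%N -> nth x0 u k = nth x0 v k) -> u = v.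
Proof. exact: eq_from_nth. Qed.

Lemma mkseq_cons (T : Type) (f : nat -> T) L : mkseq f L.+1 = f 0%N :: mkseq (f \o S) L.
Proof.
rewrite /mkseq /=; have -> : iota 1 L = map (addn 1) (iota 0 L) by rewrite -iotaDl.
by rewrite -map_comp; congr (_ :: _); apply: eq_map => k /=; rewrite add1n.
Qed.

Lemma iotaw_cons k s : iotaw (k :: s) = rcons (nseq k.-1 x0) x1 ++ iotaw s.
Proof. by []. Qed.

Lemma iotaw_nseq2 m : iotaw (nseq m 2) = mkseq odd (2 * m).
Proof.
elim: m => [|m IH] //; rewrite /= iotaw_cons IH.
have -> : (2 * m.+1 = (2 * m).+2)%N by lia.
by rewrite !mkseq_cons /=; congr [:: _, _ & _]; apply: eq_mkseq => k /=; lia.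
Qed.

Lemma iotaw_flip_word al be :
  iotaw (nseq al 2 ++ 3 :: nseq be 2) = flip_word (2 * al) (2 * al + 2 * be + 3).
Proof.
elim: al => [|al IH].
  rewrite /= iotaw_cons iotaw_nseq2 /flip_word.
  have -> : (2 * 0 + 2 * be + 3 = (2 * be).+3)%N by lia.
  by rewrite !mkseq_cons /=; congr [:: _, _, _ & _]; apply: eq_mkseq => k /=; lia.
rewrite /= iotaw_cons IH /flip_word.
have -> : (2 * al.+1 + 2 * be + 3 = (2 * al + 2 * be + 3).+2)%N by lia.
rewrite !mkseq_cons /=; congr [:: _, _ & _].
by apply: eq_mkseq => k /=; rewrite !negbK; case: ifP => H1; case: ifP => H2; lia.
Qed.

Section FlipWordBlocks.
Variables a b r : nat.
Local Notation N := (2 * a + 2 * b + 3)%N.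
Local Notation n := (2 * r).+1.
Local Notation w := (flip_word (2 * a) N).

Lemma nth_framed_flip k : (k < N.+2)%N ->
  nth x0 (framed w) k = if (k <= (2 * a).+1)%N then ~~ odd k else odd k.
Proof.
rewrite /framed; case: k => [|k] Hk //=.
rewrite nth_rcons size_flip_word; case: ifP => H1.
  by rewrite nth_flip_word //; case: ifP; case: ifP; lia.
by rewrite /x0; case: ifP => _; case: ifP; lia.
Qed.

Definition block i := drop i.+1 (take (i + n.+1) (framed w)).

Lemma size_block i : (i + n <= N)%N -> size (block i) = n.
Proof. by move=> H; rewrite /block size_drop size_takel /framed /= ?size_rcons ?size_flip_word; lia. Qed.

Lemma nth_block i k : (i + n <= N)%N -> (k < n)%N -> nth x0 (block i) k = nth x0 (framed w) (i.+1 + k).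
Proof. by move=> H Hk; rewrite /block nth_drop nth_take //; lia. Qed.

Definition straddles i := (i <= (2 * a).+1)%N && (2 * a <= i + 2 * r)%N.

Lemma gap_int_flip_word i : (i + n <= N)%N ->
  gap_int w (i, i + n.+1) =
    if straddles i then
      if odd i then [:: ((-1)%R, flip_word (i + 2 * r - 2 * a - 1) n)]
      else pword (flip_word (2 * a - i) n)
    else [::].
Proof.
move=> Hi; rewrite /gap_int /= -/(block i) !nth_framed_flip; try lia.
have Hsz := size_block Hi.
set ei := (if (i <= _)%N then _ else _); set ej := (if (i + _ <= _)%N then _ else _).
case Hs : (straddles i); move: Hs; rewrite /straddles => Hs; last first.
  have -> : ej = ei by rewrite /ei /ej; case: ifP; case: ifP; lia.
  by rewrite /Iint eqxx; case: (block i) Hsz.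
case: ifP => Ho.
  have -> : ei = false by rewrite /ei; case: ifP; lia.
  have -> : ej = true by rewrite /ej; case: ifP; lia.
  rewrite /Iint /= Hsz -signr_odd /=; have -> : odd (2 * r) = false by lia.
  congr [:: (_, _)]; apply: eq_word_nth; first by rewrite size_rev size_flip_word.
  move=> k; rewrite size_rev Hsz => Hk; rewrite nth_rev Hsz // nth_block; try lia.
  rewrite nth_framed_flip; last by lia.
  by rewrite nth_flip_word //; case: ifP; case: ifP; lia.
have -> : ei = true by rewrite /ei; case: ifP; lia.
have -> : ej = false by rewrite /ej; case: ifP; lia.
rewrite /Iint /=; congr pword; apply: eq_word_nth; first by rewrite Hsz size_flip_word.
move=> k; rewrite Hsz => Hk; rewrite nth_block //; rewrite nth_framed_flip; last by lia.
by rewrite nth_flip_word //; case: ifP; case: ifP; lia.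
Qed.

Lemma flip_word_cut_block i : (i + n <= N)%N -> straddles i ->
  take i w ++ drop (i + n) w = iotaw (nseq (a + b + 1 - r) 2).
Proof.
move=> Hi Hs; rewrite iotaw_nseq2; apply: eq_word_nth.
  by rewrite size_cat size_take size_drop size_mkseq size_flip_word; case: ifP; lia.
move=> k; rewrite size_cat size_take size_drop size_flip_word => Hk.
move: Hs; rewrite /straddles => Hs.
rewrite nth_cat size_take size_flip_word; case: ifP => H1.
  rewrite nth_take; last by move: H1; case: ifP; lia.
  rewrite nth_flip_word ?nth_mkseq; try (move: H1 Hk; case: ifP; lia).
  by move: H1; case: ifP; case: ifP; lia.
rewrite nth_drop nth_flip_word ?nth_mkseq; try (move: H1 Hk; case: ifP; lia).
by move: H1; case: ifP; case: ifP; lia.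
Qed.

Lemma gon_term_flip_block i : (i + n <= N)%N ->
  gon_term w (block_mask N n i) = tensor (gap_int w (i, i + n.+1)) (zetaw (nseq (a + b + 1 - r) 2)).
Proof.
move=> Hi; have := @gon_term_block_mask w n i (ltn0Sn _); rewrite size_flip_word => -> //.
rewrite /zetaw; case Hs : (straddles i); first by rewrite flip_word_cut_block.
by rewrite gap_int_flip_word // Hs.
Qed.

End FlipWordBlocks.

Definition flip_ind (n x : nat) (w0 : word) : rat := (flip_word x n == w0)%:R.

Section DefectSums.
Variables a b r : nat.
Hypothesis r_gt0 : (0 < r)%N.
Hypothesis r_le_ab : (r <= a + b)%N.
Local Notation N := (2 * a + 2 * b + 3)%N.
Local Notation n := (2 * r).+1.
Local Notation w := (flip_word (2 * a) N).
Local Notation starts := (iota 0 (N - n).+1).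

Definition even_straddle i := straddles a r i && ~~ odd i.
Definition odd_straddle i := straddles a r i && odd i.
Definition left_range al := (al <= a)%N && (r.-1 - al <= b)%N.
Definition right_range al := (al < a)%N && (r.-1 - al <= b)%N.

Lemma perm_even_defects : perm_eq [seq 2 * a - i | i <- starts & even_straddle i]%N
  ([seq 2 * al | al <- iota 0 r & left_range al]%N ++ (if r <= a then [:: 2 * r] else [::])%N).
Proof.
apply: uniq_perm.
- rewrite map_inj_in_uniq ?filter_uniq ?iota_uniq //.
  by move=> i j; rewrite !mem_filter !mem_iota /even_straddle /straddles; lia.
- rewrite cat_uniq map_inj_in_uniq ?filter_uniq ?iota_uniq //=; last by move=> i j _ _; lia.
  case: ifP => _ //=; rewrite andbT orbF; apply/mapP => [[al]].
  by rewrite mem_filter mem_iota; lia.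
move=> x; rewrite mem_cat; apply/idP/idP.
  move=> /mapP [i]; rewrite mem_filter mem_iota /even_straddle /straddles => Hi ->.
  case: (ltnP (2 * a - i) (2 * r)) => H.
    apply/orP; left; apply/mapP; exists ((2 * a - i)./2); last by move: Hi; lia.
    by rewrite mem_filter mem_iota /left_range; move: Hi; lia.
  by apply/orP; right; case: ifP; rewrite ?inE; move: Hi; lia.
move=> /orP [/mapP [al] | ].
  rewrite mem_filter mem_iota /left_range => Hal ->; apply/mapP; exists (2 * a - 2 * al)%N.
    by rewrite mem_filter mem_iota /even_straddle /straddles; move: Hal; lia.
  by move: Hal; lia.
case: ifP => Ha; rewrite ?inE // => /eqP ->; apply/mapP; exists (2 * a - 2 * r)%N.
  by rewrite mem_filter mem_iota /even_straddle /straddles; lia.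
lia.
Qed.

Lemma perm_odd_defects : perm_eq [seq i + 2 * r - 2 * a - 1 | i <- starts & odd_straddle i]%N
  ([seq 2 * (r.-1 - al) | al <- iota 0 r & right_range al]%N ++ (if r <= b then [:: 2 * r] else [::])%N).
Proof.
apply: uniq_perm.
- rewrite map_inj_in_uniq ?filter_uniq ?iota_uniq //.
  by move=> i j; rewrite !mem_filter !mem_iota /odd_straddle /straddles; lia.
- rewrite cat_uniq map_inj_in_uniq ?filter_uniq ?iota_uniq //=; last first.
    by move=> i j; rewrite !mem_filter !mem_iota; lia.
  case: ifP => _ //=; rewrite andbT orbF; apply/mapP => [[al]].
  by rewrite mem_filter mem_iota; lia.
move=> x; rewrite mem_cat; apply/idP/idP.
  move=> /mapP [i]; rewrite mem_filter mem_iota /odd_straddle /straddles => Hi ->.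
  case: (ltnP (i + 2 * r - 2 * a - 1) (2 * r)) => H.
    apply/orP; left; apply/mapP; exists (r.-1 - (i + 2 * r - 2 * a - 1)./2)%N; last by move: Hi; lia.
    by rewrite mem_filter mem_iota /right_range; move: Hi; lia.
  by apply/orP; right; case: ifP; rewrite ?inE; move: Hi; lia.
move=> /orP [/mapP [al] | ].
  rewrite mem_filter mem_iota /right_range => Hal ->; apply/mapP; exists (2 * a - 2 * al - 1)%N.
    by rewrite mem_filter mem_iota /odd_straddle /straddles; move: Hal; lia.
  by move: Hal; lia.
case: ifP => Hb; rewrite ?inE // => /eqP ->; apply/mapP; exists (2 * a + 1)%N.
  by rewrite mem_filter mem_iota /odd_straddle /straddles; lia.
lia.
Qed.

Local Open Scope ring_scope.

Lemma coef_block_ints w0 : coef (psum [seq gap_int w (i, i + n.+1)%N | i <- starts]) w0 =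
  \sum_(x <- [seq (2 * a - i)%N | i <- starts & even_straddle i]) flip_ind n x w0
  - \sum_(x <- [seq (i + 2 * r - 2 * a - 1)%N | i <- starts & odd_straddle i]) flip_ind n x w0.
Proof.
rewrite coef_psum !big_map !big_filter [X in _ = X - _]big_mkcond [X in _ = _ - X]big_mkcond -sumrB.
apply: eq_big_seq => i; rewrite mem_iota => Hi; rewrite gap_int_flip_word //; last by lia.
rewrite /even_straddle /odd_straddle; case: (straddles a r i) => /=; last by rewrite coef_nil subr0.
case: (odd i) => /=; last by rewrite coef_pword subr0.
by rewrite coef_cons_term coef_nil addr0 sub0r /flip_ind; case: eqP; rewrite ?oppr0.
Qed.

Lemma coef_left_sum w0 : coef (psum [seq z2a32b al (r.-1 - al) | al <- iota 0 r & left_range al]) w0 =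
  \sum_(x <- [seq (2 * al)%N | al <- iota 0 r & left_range al]) flip_ind n x w0.
Proof.
rewrite coef_psum !big_map; apply: eq_big_seq => al; rewrite mem_filter mem_iota => /andP [_ Hal].
rewrite /z2a32b /zetaw iotaw_flip_word coef_pword /flip_ind.
by have -> : (2 * al + 2 * (r.-1 - al) + 3 = n)%N by lia.
Qed.

Lemma coef_right_sum w0 : coef (psum [seq z2a32b (r.-1 - al) al | al <- iota 0 r & right_range al]) w0 =
  \sum_(x <- [seq (2 * (r.-1 - al))%N | al <- iota 0 r & right_range al]) flip_ind n x w0.
Proof.
rewrite coef_psum !big_map; apply: eq_big_seq => al; rewrite mem_filter mem_iota => /andP [_ Hal].
rewrite /z2a32b /zetaw iotaw_flip_word coef_pword /flip_ind.
by have -> : (2 * (r.-1 - al) + 2 * al + 3 = n)%N by lia.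
Qed.

Lemma coef_block_ints_defect w0 : coef (psum [seq gap_int w (i, i + n.+1)%N | i <- starts]) w0 =
  coef (psum [seq z2a32b al (r.-1 - al) | al <- iota 0 r & left_range al]) w0
  - coef (psum [seq z2a32b (r.-1 - al) al | al <- iota 0 r & right_range al]) w0
  + (ind (r <= a)%N - ind (r <= b)%N) * flip_ind n (2 * r) w0.
Proof.
rewrite coef_block_ints coef_left_sum coef_right_sum.
rewrite (perm_big _ perm_even_defects) (perm_big _ perm_odd_defects) !big_cat /= /ind.
by case: ifP => _; case: ifP => _; rewrite ?big_cons ?big_nil /=; ring.
Qed.

End DefectSums.

Definition zeta_ins (c m : nat) (w0 : word) : rat :=
  (\sum_(0 <= k < m.+1) (iotaw (nseq k 2 ++ c :: nseq (m - k) 2) == w0)%:R)%R.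

Definition odd_zeta_sum (r : nat) : Defs.poly :=
  psum [seq pscale ((-1) ^+ i) (pshuffle (zetaw [:: (2 * i).+1]) (zetaw (nseq (r - i) 2)))
       | i <- iota 1 r]%R.

Lemma coef_pword_seq (s : seq word) w0 :
  coef [seq (1 * 1, x) | x <- s]%R w0 = (\sum_(x <- s) (x == w0)%:R)%R.
Proof.
rewrite coef_map_terms /= big_mkcond; apply: eq_bigr => x _.
by rewrite mulr1; case: (x == w0).
Qed.

Lemma sum_half_double (h : nat -> rat) m :
  (\sum_(0 <= k < (2 * m).+1) h k./2 = 2 * \sum_(0 <= q < m) h q + h m)%R.
Proof.
elim: m => [|m IH]; first by rewrite big_nat1 big_geq // mulr0 add0r.
have -> : (2 * m.+1).+1 = ((2 * m).+1).+2 by lia.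
rewrite big_nat_recr //= big_nat_recr //= IH big_nat_recr //=.
have -> : uphalf (2 * m) = m by lia.
have -> : (2 * m)./2 = m by lia.
ring.
Qed.

Lemma insert_x0_alternating r k : (k <= 2 * r)%N ->
  take k (mkseq odd (2 * r)) ++ x0 :: drop k (mkseq odd (2 * r)) = flip_word (2 * k./2) (2 * r).+1.
Proof.
move=> Hk; have Hk' : (if (k < 2 * r)%N then k else (2 * r)%N) = k by case: ifP; lia.
apply: eq_word_nth.
  by rewrite size_cat size_flip_word /= size_take size_drop size_mkseq Hk'; lia.
move=> j; rewrite size_cat /= size_take size_drop size_mkseq Hk' => Hj.
rewrite nth_flip_word; last by lia.
rewrite nth_cat size_take size_mkseq Hk'; case: ifP => H1.
  by rewrite nth_take // nth_mkseq; [case: ifP; lia | lia].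
rewrite -cat1s nth_cat /=; case: ifP => H2.
  have -> : (j - k = 0)%N by lia.
  by rewrite /x0 /=; case: ifP; lia.
by rewrite nth_drop nth_mkseq; [case: ifP; lia | lia].
Qed.

Section DefectRelation.
Local Open Scope ring_scope.
Variable r : nat.
Hypothesis r_gt0 : (0 < r)%N.
Local Notation n := (2 * r).+1.

(* Inserting x0 into (x0 x1)^r gives each zeta({2}^k,3,{2}^(r-1-k)) twice and
   (x0 x1)^r x0 once. *)
Lemma Lker_x0_shuffle : Lker_coef n (fun w0 => 2 * zeta_ins 3 r.-1 w0 + flip_ind n (2 * r) w0).
Proof.
have H : Lker n (pshuffle (pword [:: x0]) (pword (iotaw (nseq r 2)))) by apply: Lker_A_gens; left; left.
apply: Lker_coef_ext ((Lker_coefP _ _).2 H) => w0.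
rewrite pshuffle_pword coef_pword_seq shw_letter big_map iotaw_nseq2 size_mkseq.
rewrite (eq_big_seq (fun k => flip_ind n (2 * k./2) w0)); last first.
  by move=> k; rewrite mem_iota => /andP [_ Hk]; rewrite insert_x0_alternating //; lia.
have := sum_half_double (fun q => flip_ind n (2 * q) w0) r; rewrite /index_iota subn0 => ->.
congr (2 * _ + _); rewrite /zeta_ins prednK //; apply: eq_big_nat => k /andP [_ Hk].
rewrite iotaw_flip_word /flip_ind.
by have -> : (2 * k + 2 * (r.-1 - k) + 3 = n)%N by lia.
Qed.

End DefectRelation.

Lemma iotainv_aux_nseq c j rest :
  iotainv_aux c (nseq j false ++ true :: rest) = (c + j).+1 :: iotainv_aux 0 rest.
Proof. by elim: j c => [|j IH] c /=; rewrite ?addn0 // IH addnS. Qed.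

Lemma iotainvK ks : all (fun k => 0 < k)%N ks -> iotainv (iotaw ks) = ks.
Proof.
rewrite /iotainv; elim: ks => [|k ks IH] //= /andP [Hk Hks].
by rewrite iotaw_cons cat_rcons iotainv_aux_nseq add0n prednK // IH.
Qed.

Lemma last_iotaw ks : last x1 (iotaw ks) = x1.
Proof. by elim: ks => [|k ks IH] //=; rewrite iotaw_cons last_cat last_rcons. Qed.

Lemma stuffle_single_cons c d v : stuffle [:: c] (d :: v) =
  (c :: d :: v) :: (map (cons d) (stuffle [:: c] v) ++ [:: (c + d)%N :: v]).
Proof. by []. Qed.

Lemma big_stuffle_single_nseq2 c m (F : seq nat -> rat) :
  (\sum_(k <- stuffle [:: c] (nseq m 2)) F k =
  \sum_(0 <= j < m.+1) F (nseq j 2 ++ c :: nseq (m - j) 2) +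
  \sum_(0 <= j < m) F (nseq j 2 ++ (c + 2)%N :: nseq (m.-1 - j) 2))%R.
Proof.
elim: m F => [|m IH] F; first by rewrite /= big_cons big_nil big_nat1 big_geq.
rewrite [in LHS](_ : nseq m.+1 2%N = 2%N :: nseq m 2%N) // stuffle_single_cons.
rewrite big_cons big_cat big_map IH big_cons big_nil (big_nat_recl m.+1) // (big_nat_recl m) //=.
rewrite [X in _ = (_ + X)%R](big_nat_recl m) //=.
have -> : (\sum_(0 <= j < m) F (2%N :: nseq j 2 ++ (c + 2)%N :: nseq (m - j.+1) 2) =
          \sum_(0 <= j < m) F (2%N :: nseq j 2 ++ (c + 2)%N :: nseq (m.-1 - j) 2))%R.
  by apply: eq_big_nat => j Hj; have -> : (m - j.+1 = m.-1 - j)%N by lia.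
by rewrite subn0; ring.
Qed.

(* The stuffle relation for zeta(c) zeta({2}^m), whose shuffle side is a product. *)
Lemma Lker_zeta_ins_stuffle n c m : (2 <= c)%N -> (0 < m)%N ->
  Lker_coef n (fun w0 => zeta_ins c m w0 + zeta_ins (c + 2) m.-1 w0)%R.
Proof.
move=> Hc Hm; set u := zetaw [:: c]; set v := zetaw (nseq m 2).
have Hg : R_gens (psub (pshuffle u v) (pstuffle_iota u v)).
  right; right; exists u, v; split; last split => //.
    move=> t; rewrite inE => /eqP -> /=; rewrite /conv_word.
    by rewrite (_ : c = (c - 2).+2); [rewrite iotaw_cons /= cats0 last_rcons | lia].
  move=> t; rewrite inE => /eqP -> /=; rewrite /adm_word.
  rewrite (_ : m = m.-1.+1); last by lia.
  by rewrite (_ : nseq m.-1.+1 2%N = 2%N :: nseq m.-1 2%N) // iotaw_cons last_cat last_rcons last_iotaw orbT.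
have Hp : Lker n (pshuffle u v).
  apply: Lker_pshuffle_pos => t; rewrite inE => /eqP -> /=; rewrite /pos_word.
    by rewrite /iotaw /= cats0 size_rcons.
  by rewrite iotaw_nseq2 size_mkseq; lia.
have Hs : Lker n (psub (pshuffle u v) (psub (pshuffle u v) (pstuffle_iota u v))).
  by apply: inspan_psub => //; apply: Lker_R_gens.
apply: Lker_coef_ext ((Lker_coefP _ _).2 Hs) => w0.
rewrite !coef_psub opprB [RHS]addrC subrK.
rewrite /pstuffle_iota /u /v /zetaw /pword /= cats0 coef_map_terms /=.
rewrite iotainvK /=; last by rewrite andbT; lia.
rewrite iotainvK; last by rewrite all_nseq orbT.
rewrite big_mkcond /= (eq_bigr (fun k => (iotaw k == w0)%:R)%R); last first.
  by move=> k _; rewrite mulr1; case: eqP.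
by rewrite big_stuffle_single_nseq2 /zeta_ins prednK.
Qed.

Section OddZetaRelation.
Local Open Scope ring_scope.
Variable r : nat.
Hypothesis r_gt0 : (0 < r)%N.
Local Notation n := (2 * r).+1.

Lemma Lker_zeta_ins_shift t : (t <= r.-1)%N ->
  Lker_coef n (fun w0 => zeta_ins 3 r.-1 w0 - (-1) ^+ t * zeta_ins (2 * t + 3) (r.-1 - t) w0).
Proof.
elim: t => [|t IH] Ht.
  by apply: Lker_coef_ext (Lker_coef0 n) => w0; rewrite expr0 mul1r subn0 subrr.
have Hst := @Lker_zeta_ins_stuffle n (2 * t + 3) (r.-1 - t) (ltac:(lia)) (ltac:(lia)).
apply: Lker_coef_ext (Lker_coefD (IH (ltnW Ht)) (Lker_coefZ ((-1) ^+ t) Hst)) => w0.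
have -> : (2 * t.+1 + 3 = 2 * t + 3 + 2)%N by lia.
have -> : (r.-1 - t.+1 = (r.-1 - t).-1)%N by lia.
by rewrite exprS; ring.
Qed.

Lemma Lker_zeta_ins_odd_zeta :
  Lker_coef n (fun w0 => zeta_ins 3 r.-1 w0 - (-1) ^+ r.-1 * zeta_ins n 0 w0).
Proof.
apply: Lker_coef_ext (Lker_zeta_ins_shift (leqnn r.-1)) => w0.
by rewrite subnn; have -> : (2 * r.-1 + 3 = n)%N by lia.
Qed.

Lemma Lker_odd_zeta_sum : Lker_coef n (fun w0 => coef (odd_zeta_sum r) w0 - (-1) ^+ r * zeta_ins n 0 w0).
Proof.
have E : iota 1 r = iota 1 r.-1 ++ [:: r].
  have -> : iota 1 r = iota 1 (r.-1 + 1) by rewrite addn1 prednK.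
  by rewrite iotaD add1n prednK.
set P := psum [seq pscale ((-1) ^+ i) (pshuffle (zetaw [:: (2 * i).+1]) (zetaw (nseq (r - i) 2)))
              | i <- iota 1 r.-1].
have HP : Lker n P.
  apply: inspan_flatten => p /mapP [i]; rewrite mem_iota => Hi ->.
  apply/inspan_scale/Lker_pshuffle_pos => t; rewrite inE => /eqP -> /=; rewrite /pos_word.
    by rewrite /iotaw /= cats0 size_rcons.
  by rewrite iotaw_nseq2 size_mkseq; lia.
apply: Lker_coef_ext ((Lker_coefP _ _).2 HP) => w0.
rewrite /odd_zeta_sum E map_cat /psum flatten_cat coef_cat -/(psum _) -/P /= cats0.
rewrite coef_pscale subnn /zetaw /= pshuffle_pone_r coef_pword.
by rewrite /zeta_ins big_nat1 /= addrK.
Qed.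

Lemma Lker_defect_odd_zeta_sum : Lker_coef n (fun w0 => flip_ind n (2 * r) w0 - 2 * coef (odd_zeta_sum r) w0).
Proof.
have := Lker_coefD (Lker_coefD (Lker_x0_shuffle r_gt0) (Lker_coefZ (-2) Lker_zeta_ins_odd_zeta))
                   (Lker_coefZ (-2) Lker_odd_zeta_sum).
apply: Lker_coef_ext => w0.
have -> : (-1) ^+ r = - (-1) ^+ r.-1 :> rat by rewrite -{1}(prednK r_gt0) exprS mulN1r.
ring.
Qed.

End OddZetaRelation.

Section XiCoefficients.
Variables a b r : nat.
Hypothesis r_gt0 : (0 < r)%N.
Hypothesis r_le_ab : (r <= a + b)%N.
Local Notation N := (2 * a + 2 * b + 3)%N.
Local Notation n := (2 * r).+1.
Local Notation w := (flip_word (2 * a) N).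
Local Notation starts := (iota 0 (N - n).+1).

Lemma coef_xi w0 : coef (xi r a b) w0 =
  (coef (psum [seq z2a32b al (r.-1 - al) | al <- iota 0 r & left_range a b r al]) w0
  - coef (psum [seq z2a32b (r.-1 - al) al | al <- iota 0 r & right_range a b r al]) w0
  + 2 * (ind (r <= a)%N - ind (r <= b)%N) * coef (odd_zeta_sum r) w0)%R.
Proof. by rewrite /xi !coef_padd !coef_pscale mulN1r. Qed.

Lemma Lker_block_ints_sub_xi : Lker n (psub (psum [seq gap_int w (i, i + n.+1) | i <- starts]) (xi r a b)).
Proof.
apply/Lker_coefP.
apply: Lker_coef_ext (Lker_coefZ (ind (r <= a)%N - ind (r <= b)%N)%R (Lker_defect_odd_zeta_sum r_gt0)).
by move=> w0; rewrite coef_psub coef_block_ints_defect // coef_xi; ring.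
Qed.

Lemma block_sum_flip_word : tcoef (block_sum w n) =1
  tcoef (tensor (psum [seq gap_int w (i, i + n.+1) | i <- starts]) (zetaw (nseq (a + b + 1 - r) 2))).
Proof.
move=> ww; rewrite /block_sum size_flip_word -tcoef_flatten_tensor_r; congr (tcoef (flatten _) _).
by apply/eq_in_map => i; rewrite mem_iota => Hi; apply: gon_term_flip_block; lia.
Qed.

End XiCoefficients.

Theorem mainTheorem18 (a b r : nat) :
  (1 <= r)%N -> (r <= a + b)%N ->
  eqLZ (2 * r).+1 (Dpre (iotaw (nseq a 2%N ++ 3%N :: nseq b 2%N)))
       (tensor (xi r a b) (zetaw (nseq (a + b + 1 - r) 2%N))).
Proof.
move=> r_gt0 r_le_ab; rewrite iotaw_flip_word.
have n_le : ((2 * r).+1 <= size (flip_word (2 * a) (2 * a + 2 * b + 3)))%N.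
  by rewrite size_flip_word; lia.
apply: eqLZ_trans (Dpre_block_sum (ltn0Sn _) n_le) _.
apply: eqLZ_tcoef_l (block_sum_flip_word r_gt0 r_le_ab) _.
exact/eqLZ_tensor_l/Lker_block_ints_sub_xi.
Qed.
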